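(* Let the Schubart orbit have minimal period $4$ and let $\mathcal{A}_{Schubart}$ denote its action over one period $t\in[0,4]$. Then $\tfrac14\mathcal{A}_{Schubart}<3.5383$.
   Context: Planar (in fact collinear) three-body problem with masses $m_1=m_2=m_3=1$, action $\int(\tfrac12\sum|\dot q_i|^2+\sum_{i<j}1/|q_i-q_j|)dt$. The Schubart orbit is the collinear periodic solution (with regularized binary collisions) in which the middle body alternately collides with the two outer bodies. It is normalized so that at $t=0$ bodies 1 and 2 undergo a binary collision, and at $t=1$ body 1 is at the origin with bodies 2 and 3 symmetrically placed on either side (an Euler configuration). A quarter of it ($t\in[0,1]$) is an action minimizer over $H^1$ paths on the $x$-axis with center of mass $0$ connecting some configuration $(q_1,q_2,q_3)=(-c_1,-c_1,2c_1)$ to some configuration $(0,-d_1,d_1)$, $(c_1,d_1)\in\mathbb{R}^2$. *)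

From HB Require Import structures.
From mathcomp Require Import all_boot all_order all_algebra.
From mathcomp Require Import all_classical all_reals all_analysis.
Set Implicit Arguments. Unset Strict Implicit. Unset Printing Implicit Defensive.
Import Order.TTheory GRing.Theory Num.Theory.
Local Open Scope classical_set_scope.
Local Open Scope ring_scope.

Section Schubart.
Variable R : realType.

(* Newtonian pair potential 1/|x-y| (unit masses), equal to +oo at collision. *)
Definition pairpot (x y : R) : \bar R :=
  if x == y then +oo%E else (`|x - y|^-1)%:E.

Definition lagrangian (q1 q2 q3 v1 v2 v3 : R -> R) (t : R) : \bar R :=
  (((v1 t ^+ 2 + v2 t ^+ 2 + v3 t ^+ 2) / 2)%:E
   + pairpot (q1 t) (q2 t) + pairpot (q1 t) (q3 t) + pairpot (q2 t) (q3 t))%E.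

Definition action (q1 q2 q3 v1 v2 v3 : R -> R) : \bar R :=
  (\int[@lebesgue_measure R]_(t in `[0%R, 1%R]) lagrangian q1 q2 q3 v1 v2 v3 t)%E.

(* q is in H^1([0,1]) with weak derivative v: v is square-integrable on
   [0,1] and q(t) = q(0) + int_0^t v for t in [0,1]. *)
Definition H1_with_deriv (q v : R -> R) : Prop :=
  (@lebesgue_measure R).-integrable `[0%R, 1%R] (EFin \o v) /\
  (@lebesgue_measure R).-integrable `[0%R, 1%R] (EFin \o (fun t => v t ^+ 2)) /\
  forall t, t \in `[0%R, 1%R] ->
    q t = q 0 + Rintegral (@lebesgue_measure R) `[0, t] v.

Definition admissible (q1 q2 q3 v1 v2 v3 : R -> R) : Prop :=
  [/\ H1_with_deriv q1 v1, H1_with_deriv q2 v2, H1_with_deriv q3 v3,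
      (forall t, t \in `[0%R, 1%R] -> q1 t + q2 t + q3 t = 0)
    & exists c d : R,
      [/\ q1 0 = - c, q2 0 = - c & q3 0 = 2 * c] /\
      [/\ q1 1 = 0, q2 1 = - d & q3 1 = d]].

(* The action of a quarter of the Schubart orbit = the minimal action over
   admissible paths (the quarter is an action minimizer in this class). *)
Definition schubart_quarter_action : \bar R :=
  ereal_inf [set A | exists q1 q2 q3 v1 v2 v3 : R -> R,
     admissible q1 q2 q3 v1 v2 v3 /\ A = action q1 q2 q3 v1 v2 v3].

Definition schubart_action : \bar R := (4%:E * schubart_quarter_action)%E.

End Schubart.

From mathcomp Require Import all_boot all_order all_algebra.
From mathcomp Require Import all_classical all_reals all_analysis.
From mathcomp Require Import measurable_realfun ring lra.
Import Order.TTheory GRing.Theory Num.Theory.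
Import numFieldNormedType.Exports.
Local Open Scope classical_set_scope.
Local Open Scope ring_scope.

(* The quarter action is an infimum over admissible paths, so one explicit path
   bounds it.  Keep body 3 at rest at a and let bodies 1 and 2 leave their binary
   collision like t^(2/3) (the collision rate that keeps the kinetic energy
   integrable): q1 = a/2 (t^(2/3) - 1), q2 = -a - q1.  On ]0, 1] its Lagrangian is
   (a^2/9 + 1/a) t^(-2/3) + 12 / (a (9 - t^(4/3))); bounding the last term by a chord
   and integrating the singular but integrable terms with an improper fundamental
   theorem of calculus gives an action of at most a^2/3 + 53/(12a). *)

Lemma is_derive_continuous {R : realType} {F : R -> R} {x dF : R} :
  is_derive x 1 F dF -> {for x, continuous F}.
Proof. by move=> [dF1 _]; exact/differentiable_continuous/derivable1_diffP. Qed.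

Section improper_FTC.
Context {R : realType}.
Local Notation mu := (@lebesgue_measure R).
Context {f F : R -> R} {a b : R}.
Hypothesis ab : a < b.
Hypothesis f_ge0 : {in `]a, b], forall x, 0 <= f x}.
Hypothesis f_cont : {in `]a, b], continuous f}.
Hypothesis F_der : {in `]a, b], forall x : R, is_derive x 1 F (f x)}.
Hypothesis F_cvg : F x @[x --> a^'+] --> F a.

Lemma continuous_measurable_fun_oc : measurable_fun `]a, b] f.
Proof.
apply/measurable_fun_itv_bndo_bndcP; apply: open_continuous_measurable_fun.
  exact: interval_open.
by move=> x /[!inE] /subset_itv_oo_oc xab; exact: f_cont.
Qed.

Let measurable_EFin_oc : measurable_fun `]a, b] (EFin \o f).
Proof. by apply/measurable_EFinP; exact: continuous_measurable_fun_oc. Qed.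

Let u (n : nat) : R := a + (b - a) / n.+2%:R.

Let u_gt n : a < u n.
Proof. by rewrite ltrDl divr_gt0 ?subr_gt0. Qed.

Let u_lt n : u n < b.
Proof. by rewrite -ltrBrDl ltr_pdivrMr // ltr_pMr ?subr_gt0 // ltr1n. Qed.

Let u_cvg : u n @[n --> \oo] --> a.
Proof.
rewrite -[X in _ --> X]addr0; apply: cvgD; first exact: cvg_cst.
rewrite -(mulr0 (b - a)); apply: cvgMr.
have := @cvg_harmonic R; rewrite -cvg_shiftS; apply: cvg_trans.
by apply: near_eq_cvg; near=> n.
Unshelve. all: by end_near. Qed.

Let sub_u n : {subset `[u n, b] <= `]a, b]}.
Proof. by apply: subitvP; rewrite subitvE !bnd_simp u_gt. Qed.

Let integral_cc_u n : (\int[mu]_(x in `[u n, b]) (f x)%:E = (F b - F (u n))%:E)%E.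
Proof.
rewrite EFinB; apply: continuous_FTC2 => //.
- by apply: continuous_in_subspaceT => x /[!inE] /sub_u; exact: f_cont.
- split.
  + by move=> x /subset_itv_oo_cc /sub_u /F_der [].
  + apply: cvg_at_right_filter; apply: (is_derive_continuous (F_der (u n) _)).
    by rewrite in_itv /= u_gt (ltW (u_lt n)).
  + apply: cvg_at_left_filter; apply: (is_derive_continuous (F_der b _)).
    by rewrite in_itv /= ab lexx.
- by move=> x /subset_itv_oo_cc /sub_u /F_der [_ <-]; rewrite derive1E.
Qed.

Lemma ge0_continuous_FTC2_oc :
  (\int[mu]_(x in `]a, b]) (f x)%:E = (F b - F a)%:E)%E.
Proof.
have bigcup_u : \bigcup_n `[u n, b]%classic = `]a, b]%classic.
  apply/seteqP; split=> x /=; first by move=> [n _]; exact: sub_u.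
  rewrite in_itv /= => /andP[ax xb].
  near \oo => n.
  exists n => //=; rewrite in_itv /= xb andbT ltW //.
  by near: n; exact: (cvgr_lt a u_cvg x ax).
have nd_u : {homo (fun n => `[u n, b]%classic) : n m / (n <= m)%N >-> (n <= m)%O}.
  move=> n m nm; rewrite subsetEset; apply: subset_itvr; rewrite bnd_simp.
  by rewrite lerD2l ler_pM2l ?subr_gt0 // lef_pV2 ?posrE ?ltr0n // ler_nat.
have int_cvg : (\int[mu]_(x in `[u n, b]) (f x)%:E)%E @[n --> \oo] -->
    (\int[mu]_(x in `]a, b]) (f x)%:E)%E.
  rewrite -bigcup_u; apply: ge0_nondecreasing_set_cvg_integral => // n.
    by apply: measurable_funS measurable_EFin_oc => // x /= /sub_u.
  by move=> x /sub_u /f_ge0.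
rewrite -(cvg_lim _ int_cvg) //; apply: cvg_lim => //.
under eq_fun do rewrite integral_cc_u.
apply: cvg_EFin; first exact: nearW.
apply: cvgB; first exact: cvg_cst.
exact: (cvg_at_rightP F a (F a)).1.
Unshelve. all: by end_near. Qed.

Lemma ge0_continuous_FTC2_cc :
  (\int[mu]_(x in `[a, b]) (f x)%:E = (F b - F a)%:E)%E.
Proof.
by rewrite -integral_itv_obnd_cbnd ?ge0_continuous_FTC2_oc.
Qed.

Lemma ge0_continuous_FTC2_integrable : mu.-integrable `[a, b] (EFin \o f).
Proof.
apply/integrableP; split.
  by apply/measurable_EFinP/measurable_fun_itv_obnd_cbndP; exact: continuous_measurable_fun_oc.
rewrite -integral_itv_obnd_cbnd; last first.
  apply/measurable_EFinP; apply: measurableT_comp => //.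
  exact: continuous_measurable_fun_oc.
suff -> : (\int[mu]_(x in `]a, b]) `|(EFin \o f) x| = \int[mu]_(x in `]a, b]) (f x)%:E)%E.
  by rewrite ge0_continuous_FTC2_oc ltry.
by apply: eq_integral => x /[!inE] /f_ge0 fx0 /=; rewrite ger0_norm.
Qed.

Lemma Rintegral_ge0_continuous_FTC2_cc : \int[mu]_(x in `[a, b]) f x = F b - F a.
Proof. by rewrite /Rintegral ge0_continuous_FTC2_cc. Qed.

End improper_FTC.

Lemma powR_thirds {R : realType} (t : R) (n : nat) :
  t `^ (n%:R / 3) = (t `^ (1/3)) ^+ n.
Proof. by rewrite div1r mulrC powRrM powR_mulrn // powR_ge0. Qed.

Lemma is_derive_scale_powR {R : realType} (c r x : R) : 0 < x ->
  is_derive x 1 (fun t => c * t `^ r) (c * (r * x `^ (r - 1))).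
Proof.
(* [is_derive1_powR] holds only for [0 < x]; once it is in the context, instance
   search proves the derivative of the convertible form [c \*: powR^~ r]. *)
move=> x0; have := is_derive1_powR r x0 => ?.
exact: (is_derive_eq (f := c \*: @powR R ^~ r)).
Qed.

Lemma continuous_scale_powR {R : realType} (c r x : R) : 0 < x ->
  {for x, continuous (fun t => c * t `^ r)}.
Proof. by move=> x0; exact: is_derive_continuous (is_derive_scale_powR c r x x0). Qed.

Lemma powR_cvg_at_right0 {R : realType} (r : R) : 0 < r ->
  t `^ r @[t --> 0^'+] --> 0 `^ r.
Proof. by move=> r0; rewrite powR0 ?gt_eqF //; exact: powR_cvg0. Qed.

(* [4/3 + s/6] is the chord of the convex function [12/(9 - s)] over [0, 1]. *)
Lemma chord_bound_div_9_sub {R : realType} (s : R) : 0 <= s <= 1 ->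
  12 / (9 - s) <= 4/3 + s/6.
Proof. by move=> /andP[s0 s1]; rewrite ler_pdivrMr; [nra | lra]. Qed.

Lemma ge0_le_integral_nonmeasurable {d} {T : measurableType d} {R : realType}
    (mu : {measure set T -> \bar R}) (D : set T) (f g : T -> \bar R) :
  (forall x, D x -> 0 <= f x)%E -> (forall x, D x -> f x <= g x)%E ->
  (\int[mu]_(x in D) f x <= \int[mu]_(x in D) g x)%E.
Proof.
move=> f0 fg; have g0 x (Dx : D x) := le_trans (f0 x Dx) (fg x Dx).
rewrite (ge0_integralE mu f0) (ge0_integralE mu g0).
apply: ereal_sup_le => _ [h hf <-]; exists h => // x.
apply: le_trans (hf x) _; rewrite /patch; case: ifP => // /set_mem.
exact: fg.
Qed.

Section H1.
Context {R : realType}.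
Local Notation mu := (@lebesgue_measure R).

Lemma H1_with_deriv_cst (c : R) : H1_with_deriv (fun _ => c) (fun _ => 0).
Proof.
have zero_integrable : mu.-integrable `[0, 1] (fun _ => 0%E) by exact: integrable0.
split; first by rewrite /comp; exact: zero_integrable.
split; first by rewrite /comp expr0n; exact: zero_integrable.
by move=> t _; rewrite Rintegral_cst // mul0r addr0.
Qed.

Lemma H1_with_deriv_sub (c : R) (q v : R -> R) : H1_with_deriv q v ->
  H1_with_deriv (fun t => c - q t) (fun t => - v t).
Proof.
move=> [iv [iv2 qE]]; split.
  by rewrite (_ : _ \o _ = -%E \o (EFin \o v)); [exact: integrableN | apply/funext => t /=].
split.
  rewrite (_ : (fun t => (- v t) ^+ 2) = fun t => v t ^+ 2) //.
  by apply/funext => t; rewrite sqrrN.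
move=> t t01; rewrite (qE t t01).
have -> : \int[mu]_(x in `[0, t]) - v x = \int[mu]_(x in `[0, t]) (-1 * v x).
  by apply: eq_Rintegral => x _; rewrite mulN1r.
rewrite RintegralZl //; first by ring.
apply: integrableS iv => //; apply: subset_itvl; rewrite bnd_simp; exact: (andP t01).2.
Qed.

End H1.

Lemma lagrangian_ge0 {R : realType} (q1 q2 q3 v1 v2 v3 : R -> R) (t : R) :
  (0 <= lagrangian q1 q2 q3 v1 v2 v3 t)%E.
Proof.
have pairpot_ge0 x y : (0 <= pairpot x y)%E.
  by rewrite /pairpot; case: ifP => _; rewrite ?leey // lee_fin invr_ge0.
by rewrite /lagrangian !adde_ge0 // lee_fin divr_ge0 // !addr_ge0 // sqr_ge0.
Qed.

Section trial_path.
Context {R : realType}.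
Local Notation mu := (@lebesgue_measure R).
Variable a : R.
Hypothesis a_gt0 : 0 < a.

Definition trial_q1 (t : R) : R := a / 2 * (t `^ (2/3) - 1).
Definition trial_q2 (t : R) : R := - a - trial_q1 t.
Definition trial_q3 (_ : R) : R := a.
Definition trial_v1 (t : R) : R := a / 3 * t `^ (-(1/3)).
Definition trial_v2 (t : R) : R := - trial_v1 t.
Definition trial_v3 (_ : R) : R := 0.

Let K : R := a ^+ 2 / 9 + a^-1.
Let lagrangian_bound (t : R) : R := K * t `^ (-(2/3)) + a^-1 * (4/3 + 6^-1 * t).
Let lagrangian_bound_primitive (t : R) : R :=
  3 * K * t `^ (1/3) + a^-1 * (4/3 * t + 12^-1 * t ^+ 2).

Lemma sqr_trial_v1 t : trial_v1 t ^+ 2 = a ^+ 2 / 9 * t `^ (-(2/3)).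
Proof.
rewrite /trial_v1 !powRN powR_thirds exprMn exprVn.
by congr (_ * _); field.
Qed.

Lemma is_derive_trial_q1 (x : R) : 0 < x -> is_derive x 1 trial_q1 (trial_v1 x).
Proof.
move=> x0; have := is_derive1_powR (2/3) x0 => ?.
rewrite (_ : trial_q1 = a / 2 \*: (@powR R ^~ (2/3) - cst 1)) //.
apply: is_derive_eq; rewrite (_ : 2/3 - 1 = -(1/3)); last by field.
by rewrite /trial_v1 /GRing.scale /=; field.
Qed.

Lemma trial_q1_cvg0 : trial_q1 t @[t --> 0^'+] --> trial_q1 0.
Proof.
apply: cvgM; first exact: cvg_cst.
by apply: cvgB; [apply: powR_cvg_at_right0; lra | exact: cvg_cst].
Qed.

Lemma trial_v1_ge0 t : 0 <= trial_v1 t.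
Proof. by rewrite /trial_v1 mulr_ge0 ?powR_ge0 // divr_ge0 // ltW. Qed.

Lemma integrable_sqr_trial_v1 : mu.-integrable `[0, 1] (EFin \o (fun t => trial_v1 t ^+ 2)).
Proof.
rewrite (_ : (fun t => _) = fun t => a ^+ 2 / 9 * t `^ (-(2/3))); last first.
  by apply/funext => t; rewrite sqr_trial_v1.
apply: (ge0_continuous_FTC2_integrable (F := fun t => a ^+ 2 / 3 * t `^ (1/3)) ltr01).
- by move=> t _; rewrite mulr_ge0 ?powR_ge0 // divr_ge0 // sqr_ge0.
- by move=> t; rewrite in_itv /= => /andP[t0 _]; exact: continuous_scale_powR.
- move=> t; rewrite in_itv /= => /andP[t0 _].
  rewrite (_ : a ^+ 2 / 9 * _ = a ^+ 2 / 3 * (1/3 * t `^ (1/3 - 1))).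
    exact: is_derive_scale_powR.
  by rewrite (_ : 1/3 - 1 = -(2/3)); field.
- by apply: cvgM; [exact: cvg_cst | apply: powR_cvg_at_right0; lra].
Qed.

Lemma H1_with_deriv_trial_q1 : H1_with_deriv trial_q1 trial_v1.
Proof.
have v1_ge0 b : {in `]0, b], forall t, 0 <= trial_v1 t} by move=> *; exact: trial_v1_ge0.
have v1_cont b : {in `]0, b], continuous trial_v1}.
  by move=> t; rewrite in_itv /= => /andP[t0 _]; exact: continuous_scale_powR.
have q1_der b : {in `]0, b], forall t : R, is_derive t 1 trial_q1 (trial_v1 t)}.
  by move=> t; rewrite in_itv /= => /andP[t0 _]; exact: is_derive_trial_q1.
split; first exact: ge0_continuous_FTC2_integrable ltr01 (v1_ge0 1) (v1_cont 1) (q1_der 1)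
  trial_q1_cvg0.
split; first exact: integrable_sqr_trial_v1.
move=> t; rewrite in_itv /= => /andP[]; rewrite le_eqVlt => /orP[/eqP <- _|t0 _].
  by rewrite set_itv1 Rintegral_set1 addr0.
rewrite (Rintegral_ge0_continuous_FTC2_cc t0 (v1_ge0 t) (v1_cont t) (q1_der t) trial_q1_cvg0).
by rewrite addrC subrK.
Qed.

Lemma trial_admissible :
  admissible trial_q1 trial_q2 trial_q3 trial_v1 trial_v2 trial_v3.
Proof.
split.
- exact: H1_with_deriv_trial_q1.
- exact: H1_with_deriv_sub H1_with_deriv_trial_q1.
- exact: H1_with_deriv_cst.
- by move=> t _; rewrite /trial_q2 /trial_q3; ring.
- exists (a / 2), a; rewrite /trial_q2 /trial_q3 /trial_q1 powR1 powR0 ?gt_eqF //.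
  by split; split => /=; field.
Qed.

Lemma trial_lagrangian t : 0 < t <= 1 ->
  lagrangian trial_q1 trial_q2 trial_q3 trial_v1 trial_v2 trial_v3 t =
  (K * t `^ (-(2/3)) + 12 / (a * (9 - t `^ (4/3))))%:E.
Proof.
move=> /andP[t0 t1].
have e12 : trial_q1 t - trial_q2 t = a * t `^ (2/3).
  by rewrite /trial_q2 /trial_q1; field.
have e13 : trial_q1 t - trial_q3 t = - (a / 2 * (3 - t `^ (2/3))).
  by rewrite /trial_q3 /trial_q1; field.
have e23 : trial_q2 t - trial_q3 t = - (a / 2 * (3 + t `^ (2/3))).
  by rewrite /trial_q2 /trial_q3 /trial_q1; field.
have P0 : 0 < t `^ (2/3) by rewrite powR_gt0.
have P1 : t `^ (2/3) <= 1.
  by rewrite -[leRHS](powRr0 t); apply: ger_powR; rewrite ?t0 //; lra.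
have g12 : 0 < a * t `^ (2/3) by rewrite mulr_gt0.
have g13 : 0 < a / 2 * (3 - t `^ (2/3)) by rewrite mulr_gt0 ?divr_gt0 //; lra.
have g23 : 0 < a / 2 * (3 + t `^ (2/3)) by rewrite mulr_gt0 ?divr_gt0 //; lra.
have n12 : (trial_q1 t == trial_q2 t) = false by rewrite -subr_eq0 e12 gt_eqF.
have n13 : (trial_q1 t == trial_q3 t) = false.
  by rewrite -subr_eq0 e13 oppr_eq0 gt_eqF.
have n23 : (trial_q2 t == trial_q3 t) = false.
  by rewrite -subr_eq0 e23 oppr_eq0 gt_eqF.
rewrite /lagrangian /pairpot n12 n13 n23 -!EFinD e12 e13 e23 !normrN !gtr0_norm //.
rewrite /trial_v2 /trial_v3 sqrrN sqr_trial_v1 expr0n /= addr0.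
have -> : t `^ (4/3) = t `^ (2/3) ^+ 2 by rewrite !powR_thirds -exprM.
by rewrite powRN /K; congr EFin; field; rewrite !gt_eqF //; nra.
Qed.

Lemma trial_lagrangian_le t : 0 < t <= 1 ->
  (lagrangian trial_q1 trial_q2 trial_q3 trial_v1 trial_v2 trial_v3 t
   <= (lagrangian_bound t)%:E)%E.
Proof.
move=> /andP[t0 t1]; rewrite trial_lagrangian ?t0 // lee_fin lerD2l.
have s_le_t : t `^ (4/3) <= t by apply: ge1r_powR; rewrite ?t0 //; lra.
have s_ge0 : 0 <= t `^ (4/3) := powR_ge0 _ _.
rewrite invfM mulrA mulrAC [a^-1 * _]mulrC ler_pM2r ?invr_gt0 //.
apply: le_trans (chord_bound_div_9_sub (t `^ (4/3)) _) _; last by lra.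
by rewrite s_ge0 (le_trans s_le_t).
Qed.

Lemma is_derive_lagrangian_bound_primitive (x : R) : 0 < x ->
  is_derive x 1 lagrangian_bound_primitive (lagrangian_bound x).
Proof.
move=> x0; have := is_derive1_powR (1/3) x0 => ?.
rewrite (_ : lagrangian_bound_primitive =
  3 * K \*: @powR R ^~ (1/3) + a^-1 \*: (4/3 \*: @id R + 12^-1 \*: @id R ^+ 2)) //.
apply: is_derive_eq; rewrite (_ : 1/3 - 1 = -(2/3)); last by field.
by rewrite /lagrangian_bound /GRing.scale /=; field; exact: lt0r_neq0.
Qed.

Lemma continuous_lagrangian_bound : {in `]0, 1], continuous lagrangian_bound}.
Proof.
move=> x; rewrite in_itv /= => /andP[x0 _]; have := is_derive1_powR (-(2/3)) x0 => ?.
rewrite (_ : lagrangian_bound =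
  K \*: @powR R ^~ (-(2/3)) + a^-1 \*: (cst (4/3) + 6^-1 \*: @id R)) //.
exact: is_derive_continuous.
Qed.

Lemma lagrangian_bound_primitive_cvg0 :
  lagrangian_bound_primitive t @[t --> 0^'+] --> lagrangian_bound_primitive 0.
Proof.
apply: cvgD; first by apply: cvgM; [exact: cvg_cst | apply: powR_cvg_at_right0; lra].
apply: cvg_at_right_filter.
exact: (@is_derive_continuous _ (a^-1 \*: (4/3 \*: @id R + 12^-1 \*: @id R ^+ 2)) 0 _ _).
Qed.

Lemma integral_lagrangian_bound :
  (\int[mu]_(t in `]0%R, 1%R]) (lagrangian_bound t)%:E = (a ^+ 2 / 3 + 53 / (12 * a))%:E)%E.
Proof.
have bound_ge0 : {in `]0, 1], forall t, 0 <= lagrangian_bound t}.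
  move=> t; rewrite in_itv /= => /andP[t0 _]; have K_ge0 : 0 <= K.
    by rewrite /K addr_ge0 ?divr_ge0 ?sqr_ge0 ?invr_ge0 ?ltW.
  by rewrite /lagrangian_bound addr_ge0 ?mulr_ge0 ?powR_ge0 // ?invr_ge0 ?ltW //; lra.
have primitive_der :
    {in `]0, 1], forall t : R, is_derive t 1 lagrangian_bound_primitive (lagrangian_bound t)}.
  by move=> t; rewrite in_itv /= => /andP[t0 _]; exact: is_derive_lagrangian_bound_primitive.
rewrite (ge0_continuous_FTC2_oc ltr01 bound_ge0 continuous_lagrangian_bound primitive_der
  lagrangian_bound_primitive_cvg0).
rewrite /lagrangian_bound_primitive powR1 powR0 ?gt_eqF // /K /=.
by congr EFin; field; exact: lt0r_neq0.
Qed.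

Lemma trial_action_le : (action trial_q1 trial_q2 trial_q3 trial_v1 trial_v2 trial_v3
  <= (a ^+ 2 / 3 + 53 / (12 * a))%:E)%E.
Proof.
(* The Lagrangian is +oo at the collision time t = 0 and need not be measurable:
   compare it with a measurable majorant G that is +oo only there. *)
pose G t := if t == 0 then +oo%E else (lagrangian_bound t)%:E.
have G_oc : {in `]0, 1]%classic, G =1 EFin \o lagrangian_bound}.
  by move=> t /[!inE] /= /[!in_itv] /andP[t0 _]; rewrite /G gt_eqF.
rewrite /action; apply: (@le_trans _ _ (\int[mu]_(t in `[0%R, 1%R]) G t)%E).
  apply: ge0_le_integral_nonmeasurable => [t _|t]; first exact: lagrangian_ge0.
  rewrite /= in_itv /= => /andP[]; rewrite le_eqVlt => /orP[/eqP <- _|t0 t1].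
    by rewrite /G eqxx leey.
  by rewrite /G gt_eqF // trial_lagrangian_le // t0.
rewrite -integral_itv_obnd_cbnd; last first.
  apply: eq_measurable_fun (fun t tin => esym (G_oc t tin)) _.
  apply/measurable_EFinP; exact: continuous_measurable_fun_oc continuous_lagrangian_bound.
have -> : (\int[mu]_(t in `]0%R, 1%R]) G t =
    \int[mu]_(t in `]0%R, 1%R]) (lagrangian_bound t)%:E)%E by exact: eq_integral.
by rewrite integral_lagrangian_bound.
Qed.

End trial_path.

Theorem corollary3p3 (R : realType) :
  (((4%:R)^-1 : R)%:E * schubart_action R < (35383%:R / 10000%:R : R)%:E)%E.
Proof.
rewrite /schubart_action muleA -EFinM mulVf ?pnatr_eq0 // mul1e.
(* 15/8 is close to the minimiser (53/8)^(1/3) of a^2/3 + 53/(12a); the resulting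
   bound is 10159/2880 = 3.5274... *)
pose a : R := 15 / 8.
have a_gt0 : 0 < a by rewrite divr_gt0.
apply: (@le_lt_trans _ _ (action (trial_q1 a) (trial_q2 a) (trial_q3 a)
                               (trial_v1 a) (trial_v2 a) trial_v3)).
  apply: ereal_inf_lbound.
  by exists (trial_q1 a), (trial_q2 a), (trial_q3 a), (trial_v1 a), (trial_v2 a), trial_v3;
    split => //; exact: trial_admissible.
apply: le_lt_trans (trial_action_le a a_gt0) _.
by rewrite lte_fin /a; lra.
Qed.
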